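(* Let $\mathfrak{B}=\bigcup_{\alpha<\xi}B_\alpha$ be a tightly $\sigma$-filtered Boolean algebra with its fixed chain $(B_\alpha)_{\alpha<\xi}$ and countable subalgebras $R_\alpha,S_\alpha$. Let $\Gamma_1,\Gamma_2\subseteq\xi$ be such that $\Gamma_1$, $\Gamma_2$ and $\Gamma_1\cap\Gamma_2$ are all saturated. Then the inclusions $E(\Gamma_1\cap\Gamma_2)\subseteq E(\Gamma_1)\subseteq E(\Gamma_1\cup\Gamma_2)$, $E(\Gamma_1\cap\Gamma_2)\subseteq E(\Gamma_2)\subseteq E(\Gamma_1\cup\Gamma_2)$ form a push-out diagram; that is, $\langle E(\Gamma_1)\cup E(\Gamma_2)\rangle=E(\Gamma_1\cup\Gamma_2)$, $E(\Gamma_1)\cap E(\Gamma_2)=E(\Gamma_1\cap\Gamma_2)$, and $E(\Gamma_1)$ and $E(\Gamma_2)$ commute.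
   Context: For a subset $X$ of a Boolean algebra, $\langle X\rangle$ is the subalgebra generated by $X$. Two subalgebras $A,S$ commute if whenever $a\in A$, $s\in S$, $a\wedge s=0$, there exist $b_1,b_2\in A\cap S$ with $a\le b_1$, $s\le b_2$, $b_1\wedge b_2=0$. A square of inclusions $R\subseteq A\subseteq B$, $R\subseteq S\subseteq B$ is a push-out diagram if $\langle A\cup S\rangle=B$, $A\cap S=R$, and $A,S$ commute. $\mathfrak{B}$ is tightly $\sigma$-filtered via an increasing chain of subalgebras $(B_\alpha)_{\alpha<\xi}$ ($\xi$ an ordinal) with $B_0=\{0,1\}$, $\mathfrak{B}=\bigcup_{\alpha<\xi}B_\alpha$, $B_\alpha=\bigcup_{\beta<\alpha}B_\beta$ for limit $\alpha$, and for each $\alpha<\xi$ countable subalgebras $R_\alpha,S_\alpha\subseteq\mathfrak{B}$ such that $R_\alpha\subseteq B_\alpha\subseteq B_{\alpha+1}$, $R_\alpha\subseteq S_\alpha\subseteq B_{\alpha+1}$ is a push-out diagram. For $\Gamma\subseteq\xi$, $E(\Gamma)=\langle\bigcup_{i\in\Gamma}S_i\rangle$. A set $\Gamma\subseteq\xi$ is saturated if $R_\gamma\subseteq E(\Gamma\cap\gamma)$ for every $\gamma\in\Gamma$. *)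

From HB Require Import structures.
From mathcomp Require Import all_boot all_order.
From mathcomp Require Import boolp classical_sets cardinality.
Set Implicit Arguments. Unset Strict Implicit. Unset Printing Implicit Defensive.
Import Order.TTheory.

(* Boolean algebras are MathComp's complemented distributive lattices with
   top and bottom (ctbDistrLatticeType).  Subsets are [set T] = T -> Prop. *)

Section BA.
Context {d : Order.disp_t} {T : ctbDistrLatticeType d}.
Local Open Scope order_scope.

Definition is_subalg (A : set T) : Prop :=
  [/\ A \bot, A \top,
      (forall x y, A x -> A y -> A (Order.meet x y)),
      (forall x y, A x -> A y -> A (Order.join x y)) &
      (forall x, A x -> A (Order.compl x))].

Definition gen (X : set T) : set T :=
  fun x => forall A : set T, is_subalg A -> (forall y, X y -> A y) -> A x.

Definition commute_subalg (A S : set T) : Prop :=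
  forall a s, A a -> S s -> Order.meet a s = \bot ->
    exists b1 b2, (A b1 /\ S b1) /\ (A b2 /\ S b2) /\ a <= b1 /\ s <= b2 /\
                  Order.meet b1 b2 = \bot.

Definition pushout (R A S B : set T) : Prop :=
  (forall x, R x -> A x) /\ (forall x, A x -> B x) /\
  (forall x, R x -> S x) /\ (forall x, S x -> B x) /\
  gen (fun x => A x \/ S x) = B /\
  (fun x => A x /\ S x) = R /\
  commute_subalg A S.
End BA.

Section Ord.
Context {dI : Order.disp_t} {I : orderType dI}.
Local Open Scope order_scope.
Definition is_succ (a b : I) : Prop := a < b /\ forall c, a < c -> b <= c.
Definition is_limit (a : I) : Prop :=
  (exists b, b < a) /\ ~ (exists b, is_succ b a).
End Ord.

Section Filt.
Context {d : Order.disp_t} {T : ctbDistrLatticeType d}.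
Context {dI : Order.disp_t} {I : orderType dI}.
Local Open Scope order_scope.

(* B_{a+1}; when a is the last element of the index ordinal xi
   (i.e. a+1 = xi) this is the whole algebra. *)
Definition Bnext (B : I -> set T) (a : I) : set T :=
  fun x => (forall c, ~ (a < c)) \/ (exists b, is_succ a b /\ B b x).

(* The ordinal xi is represented by the well-ordered type I (its elements
   are the ordinals alpha < xi).  The Boolean algebra is the whole type T. *)
Definition tightly_sigma_filtered (B R S : I -> set T) : Prop :=
  well_founded (fun a b : I => a < b) /\
  (forall a, is_subalg (B a)) /\
  (forall a b, a <= b -> forall x, B a x -> B b x) /\
  (forall i0 : I, (forall j, i0 <= j) -> B i0 = (fun x => x = \bot \/ x = \top)) /\
  (forall x, exists a, B a x) /\
  (forall a, is_limit a -> B a = (fun x => exists b, b < a /\ B b x)) /\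
  (forall a, [/\ is_subalg (R a), is_subalg (S a), countable (R a),
                 countable (S a) & pushout (R a) (B a) (S a) (Bnext B a)]).

Definition E (S : I -> set T) (G : set I) : set T :=
  gen (fun x => exists i, G i /\ S i x).

Definition saturated (R S : I -> set T) (G : set I) : Prop :=
  forall g, G g -> forall x, R g x -> E S (fun i => G i /\ i < g) x.
End Filt.

From HB Require Import structures.
From mathcomp Require Import all_boot all_order.
From mathcomp Require Import boolp classical_sets cardinality.
Set Implicit Arguments. Unset Strict Implicit. Unset Printing Implicit Defensive.
Import Order.Theory.
Local Open Scope classical_set_scope.
Local Open Scope order_scope.

(* Say that E(Γ₁) and E(Γ₂) are separated by E(Γ₁ ∩ Γ₂) if for all disjoint
   a ∈ E(Γ₁), s ∈ E(Γ₂) some z ∈ E(Γ₁ ∩ Γ₂) has a ≤ z and z ∧ s = 0.  This is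
   all of the push-out property: separating v from ¬v gives
   E(Γ₁) ∩ E(Γ₂) ⊆ E(Γ₁ ∩ Γ₂), and (z, ¬z) witnesses commutation.
   Separation is proved for Γ ∩ [0, α] by well-founded induction on α; unions
   of initial segments are directed, so they inherit it.  At a step α, each
   element of E(Γ ∩ [0, α]) is glued from elements of E(Γ ∩ [0, α)) ⊆ B_α
   along a finite cover of 1 by elements of S_α.  The push-out at α separates
   elements of B_α from elements of S_α by elements of R_α, and saturation
   puts R_α inside E(Γ ∩ [0, α)); this turns separators on the pieces into
   global ones. *)

Section Boolean.
Context {d : Order.disp_t} {T : ctbDistrLatticeType d}.
Implicit Types (A B R S X Y Z W J P : set T) (x y z v w s t u : T).

Lemma meet_eq0P x y : reflect (x `&` y = \bot) (x <= ~` y).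
Proof. by rewrite -disj_leC; apply: eqP. Qed.

Lemma subalg0 A : is_subalg A -> A \bot. Proof. by case. Qed.
Lemma subalg1 A : is_subalg A -> A \top. Proof. by case. Qed.
Lemma subalgI A x y : is_subalg A -> A x -> A y -> A (x `&` y).
Proof. by case=> _ _ h _ _; apply: h. Qed.
Lemma subalgU A x y : is_subalg A -> A x -> A y -> A (x `|` y).
Proof. by case=> _ _ _ h _; apply: h. Qed.
Lemma subalgC A x : is_subalg A -> A x -> A (~` x).
Proof. by case=> _ _ _ _ h; apply: h. Qed.

Lemma gen_subalg X : is_subalg (gen X).
Proof.
split=> [A /subalg0 //|A /subalg1 //|x y gx gy A hA hX|x y gx gy A hA hX|x gx A hA hX].
- exact: subalgI (gx A hA hX) (gy A hA hX).
- exact: subalgU (gx A hA hX) (gy A hA hX).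
- exact: subalgC (gx A hA hX).
Qed.

Lemma sub_gen X : X `<=` gen X.
Proof. by move=> x Xx A _; apply. Qed.

Lemma gen_sub X A : is_subalg A -> X `<=` A -> gen X `<=` A.
Proof. by move=> hA hX x; apply. Qed.

Definition separates Z X Y := forall x y, X x -> Y y -> x `&` y = \bot ->
  exists z, [/\ Z z, x <= z & z `&` y = \bot].

Lemma separates_mono Z Z' X X' Y Y' : Z `<=` Z' -> X' `<=` X -> Y' `<=` Y ->
  separates Z X Y -> separates Z' X' Y'.
Proof.
move=> ZZ' X'X Y'Y sep x y /X'X Xx /Y'Y Yy /(sep _ _ Xx Yy)[z [Zz xz zy]].
by exists z; split=> //; apply: ZZ'.
Qed.

Lemma separates_sym Z X Y : is_subalg Z -> separates Z X Y -> separates Z Y X.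
Proof.
move=> hZ sep y x Yy Xx; rewrite meetC => /(sep _ _ Xx Yy)[z [Zz xz /meet_eq0P yz]].
exists (~` z); split; [exact: subalgC | by rewrite lexC |].
by apply/meet_eq0P; rewrite leC.
Qed.

Lemma separates_trans Z X Y A B : Y `<=` B -> separates X A B -> separates Z X Y ->
  separates Z A Y.
Proof.
move=> YB sepA sepX a y Aa Yy /(sepA _ _ Aa (YB _ Yy))[x [Xx ax xy]].
have [z [Zz xz zy]] := sepX _ _ Xx Yy xy.
by exists z; split=> //; apply: le_trans xz.
Qed.

Lemma separates_meet_sub Z X Y : is_subalg Y -> separates Z X Y ->
  forall v, X v -> Y v -> Z v.
Proof.
move=> hY sep v Xv Yv.
have [z [Zz vz /meet_eq0P]] := sep _ _ Xv (subalgC hY Yv) (meetxC v).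
by rewrite complK => zv; rewrite -(@le_anti _ _ z v) ?vz ?zv.
Qed.

Lemma pushout_separates R A S B : pushout R A S B -> separates R A S.
Proof.
move=> [_ [_ [_ [_ [_ [ASR com]]]]]] a s Aa Ss /(com _ _ Aa Ss)[b1 [b2 [AS1 [_ [ab1 [sb2 b12]]]]]].
exists b1; split=> //; first by rewrite -ASR.
by apply/eqP; rewrite -lex0 -b12 leI2.
Qed.

Lemma pushout_of_separates R A S B : is_subalg A -> is_subalg S ->
  R `<=` A -> R `<=` S -> A `<=` B -> S `<=` B -> gen (A `|` S) = B ->
  separates R A S -> pushout R A S B.
Proof.
move=> hA hS RA RS AB SB genB sep.
have ASR : (fun x => A x /\ S x) = R.
  apply/seteqP; split; first by move=> x [Ax Sx]; apply: separates_meet_sub sep x Ax Sx.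
  by move=> x Rx; split; [apply: RA | apply: RS].
do 4!split=> //; split=> //; split=> // a s Aa Ss /(sep _ _ Aa Ss)[z [Rz az zs]].
have [Az Sz] : A z /\ S z by move: Rz; rewrite -ASR.
exists z, (~` z); do !split=> //; try exact: subalgC.
- by apply/meet_eq0P; rewrite meetC.
- exact: meetxC.
Qed.

(* [covers J]: [\top] is a finite join of members of [J]. *)
Definition covers J := forall P, P \bot ->
  (forall u v, P u -> P v -> P (u `|` v)) -> J `<=` P -> P \top.

Lemma covers_mono J J' : J `<=` J' -> covers J -> covers J'.
Proof. by move=> JJ' cJ P P0 PU J'P; apply: cJ => // s /JJ'/J'P. Qed.

Lemma covers_top J : J \top -> covers J.
Proof. by move=> Jtop P _ _; apply. Qed.

Lemma covers_meet J1 J2 J : covers J1 -> covers J2 ->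
  (forall s t, J1 s -> J2 t -> J (s `&` t)) -> covers J.
Proof.
move=> cJ1 cJ2 J12 P P0 PU JP; apply: cJ2 => // t J2t.
rewrite -[t]meet1x; apply: (cJ1 (fun s => P (s `&` t))) => [|u v|s J1s].
- by rewrite meet0x.
- by rewrite meetUl; apply: PU.
- exact/JP/J12.
Qed.

Definition patch X S v s := S s /\ exists2 x, X x & v `&` s = x `&` s.

(* [v] is glued from members of [X] along a finite cover of [\top] by members of [S]. *)
Definition patched X S v := covers (patch X S v).

Lemma patch_meet X S v s t : is_subalg S -> patch X S v s -> S t ->
  patch X S v (s `&` t).
Proof.
move=> hS [Ss [x Xx vx]] St; split; first exact: subalgI.
by exists x => //; rewrite !meetA vx.
Qed.

Lemma agreeI v w x y t : v `&` t = x `&` t -> w `&` t = y `&` t ->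
  v `&` w `&` t = x `&` y `&` t.
Proof. by move=> vx wy; rewrite -[t]meetxx meetACA vx wy meetACA. Qed.

Lemma agreeU v w x y t : v `&` t = x `&` t -> w `&` t = y `&` t ->
  (v `|` w) `&` t = (x `|` y) `&` t.
Proof. by move=> vx wy; rewrite !meetUl vx wy. Qed.

Lemma agreeC v x t : v `&` t = x `&` t -> ~` v `&` t = ~` x `&` t.
Proof.
have CE u : ~` u `&` t = t `&` ~` (u `&` t).
  by rewrite complI meetUr meetxC joinx0 meetC.
by move=> vx; rewrite CE vx -CE.
Qed.

Lemma gen_patched X S : is_subalg X -> is_subalg S -> gen (X `|` S) `<=` patched X S.
Proof.
move=> hX hS.
have patchedX x : X x -> patched X S x.
  by move=> Xx; apply: covers_top; split; [exact: subalg1 | exists x].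
have patch_op op v w : (forall x y, X x -> X y -> X (op x y)) ->
    (forall x y t, v `&` t = x `&` t -> w `&` t = y `&` t -> op v w `&` t = op x y `&` t) ->
    patched X S v -> patched X S w -> patched X S (op v w).
  move=> Xop agree pv pw; apply: (covers_meet pv pw) => s t ps pt.
  have [st [x Xx vx]] := patch_meet hS ps (proj1 pt).
  have [_ [y Yy wy]] := patch_meet hS pt (proj1 ps); rewrite (meetC t) in wy.
  by split=> //; exists (op x y); [exact: Xop Xx Yy | exact: agree vx wy].
apply: gen_sub => [|v [/patchedX //|Sv]].
- split=> [||v w|v w|v]; [exact: patchedX (subalg0 hX) | exact: patchedX (subalg1 hX) | | |].
  + by apply: (patch_op Order.meet) => [x y|]; [exact: subalgI | exact: agreeI].
  + by apply: (patch_op Order.join) => [x y|]; [exact: subalgU | exact: agreeU].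
  + move=> pv; apply: covers_mono pv => s [Ss [x Xx vx]].
    by split=> //; exists (~` x); [exact: subalgC | exact: agreeC].
move=> P P0 PU JP; rewrite -(joinxC v); apply: PU; apply: JP; split=> //.
- by exists \top; [exact: subalg1 | rewrite meet1x meetxx].
- exact: subalgC.
- by exists \bot; [exact: subalg0 | rewrite meetxC meet0x].
Qed.

Lemma covers_separator J W v y : covers J -> is_subalg W ->
  (forall s, J s -> exists c, [/\ W c, v `&` s <= c & c `&` y = \bot]) ->
  exists c, [/\ W c, v <= c & c `&` y = \bot].
Proof.
move=> cJ hW local; rewrite -[v]meetx1.
apply: cJ local => [|u w [c [Wc vc cy]] [c' [Wc' vc' c'y]]].
- by exists \bot; split; [exact: subalg0 | rewrite meetx0 | rewrite meet0x].
- exists (c `|` c'); split; first exact: subalgU.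
  + by rewrite meetUr leU2.
  + by rewrite meetUl cy c'y joinxx.
Qed.

Section Separation.
Variables (R X B S : set T).
Hypotheses (hX : is_subalg X) (hB : is_subalg B) (hS : is_subalg S).
Hypotheses (RX : R `<=` X) (XB : X `<=` B) (sepRBS : separates R B S).

Lemma separate_piece x y t : X x -> B y -> S t -> x `&` y `&` t = \bot ->
  exists x', [/\ X x', x `&` t <= x' & x' `&` y = \bot].
Proof.
move=> Xx By St /(sepRBS (subalgI hB (XB Xx) By) St)[r [Rr xyr /meet_eq0P rt]].
exists (x `&` ~` r); split.
- exact/(subalgI hX Xx)/(subalgC hX)/RX.
- by rewrite leI2 // -lexC.
- by rewrite meetAC; apply/meet_eq0P; rewrite complK.
Qed.

Lemma separates_patched_base : separates X (patched X S) B.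
Proof.
move=> v y pv By vy; apply: (covers_separator pv hX) => s [St [x Xx vx]].
have xys : x `&` y `&` s = \bot by rewrite meetAC -vx meetAC vy meet0x.
by have [x' [Xx' xx' x'y]] := separate_piece Xx By St xys; exists x'; rewrite vx.
Qed.

Lemma separates_patched2 Y Z W : Y `<=` B -> separates Z X Y ->
  Z `<=` W -> S `<=` W -> is_subalg W ->
  separates W (patched X S) (patched Y S).
Proof.
move=> YB sepZ ZW SW hW a b pa pb ab.
have cover : covers (fun t => patch X S a t /\ patch Y S b t).
  apply: (covers_meet pa pb) => s t ps pt; split; first exact: patch_meet hS ps (proj1 pt).
  by rewrite meetC; apply: patch_meet hS pt (proj1 ps).
apply: (covers_separator cover hW) => t [[St [x Xx ax]] [_ [y Yy b_y]]].
have xyt : x `&` y `&` t = \bot by rewrite -[t]meetxx meetACA -ax -b_y meetACA ab meet0x.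
have [x' [Xx' xx' x'y]] := separate_piece Xx (YB _ Yy) St xyt.
have [z [Zz x'z zy]] := sepZ _ _ Xx' Yy x'y.
exists (z `&` t); split; first exact: subalgI hW (ZW _ Zz) (SW _ St).
- by rewrite lexI leIr andbT ax (le_trans xx' x'z).
- by rewrite -meetA (meetC t) b_y meetA zy meet0x.
Qed.

End Separation.

Lemma is_subalg_bigcup (dK : Order.disp_t) (K : orderType dK) (A : K -> set T)
    (P : set K) : (exists k, P k) -> (forall k l, k <= l -> A k `<=` A l) ->
  (forall k, is_subalg (A k)) -> is_subalg (\bigcup_(k in P) A k).
Proof.
move=> [k0 Pk0] Amono hA.
have common x y : (\bigcup_(k in P) A k) x -> (\bigcup_(k in P) A k) y ->
    exists2 k, P k & A k x /\ A k y.
  move=> [k Pk Ax] [l Pl Ay]; case: (leP k l) => kl.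
  - by exists l => //; split=> //; apply: Amono kl _ Ax.
  - by exists k => //; split=> //; apply: Amono (ltW kl) _ Ay.
split=> [||x y ux uy|x y ux uy|x [k Pk Ax]].
- by exists k0 => //; apply: subalg0.
- by exists k0 => //; apply: subalg1.
- by have [k Pk [Ax Ay]] := common _ _ ux uy; exists k => //; apply: subalgI.
- by have [k Pk [Ax Ay]] := common _ _ ux uy; exists k => //; apply: subalgU.
- by exists k => //; apply: subalgC.
Qed.

End Boolean.

Section Generated.
Context {d : Order.disp_t} {T : ctbDistrLatticeType d}.
Context {dI : Order.disp_t} {I : orderType dI}.
Variable S : I -> set T.
Implicit Types (G P : set I).

Lemma E_subalg G : is_subalg (E S G).
Proof. exact: gen_subalg. Qed.

Lemma E_mono G G' : G `<=` G' -> E S G `<=` E S G'.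
Proof.
move=> GG'; apply: gen_sub (E_subalg G') _ => x [i [Gi Six]].
by apply: sub_gen; exists i; split=> //; apply: GG'.
Qed.

Lemma E_setU G1 G2 : gen (E S G1 `|` E S G2) = E S (G1 `|` G2).
Proof.
apply/seteqP; split.
- by apply: gen_sub (E_subalg _) _ => x [] /E_mono; apply=> i; [left | right].
- apply: gen_sub (gen_subalg _) _ => x [i [G12i Six]].
  by apply: sub_gen; case: G12i => Gi; [left | right]; apply: sub_gen; exists i.
Qed.

Lemma E_bigcup_upto G P : (exists b, P b) ->
  E S (G `&` P) `<=` \bigcup_(b in P) E S (G `&` [set i | i <= b]).
Proof.
move=> Pne; apply: gen_sub => [|x [i [[Gi Pi] Six]]].
- apply: is_subalg_bigcup Pne _ (fun b => E_subalg _) => b c bc.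
  by apply: E_mono => i [Gi ib]; split=> //; apply: le_trans bc.
- by exists i => //; apply: sub_gen; exists i; split=> //; split=> //=.
Qed.

End Generated.

Section Filtration.
Context {d : Order.disp_t} {T : ctbDistrLatticeType d}.
Context {dI : Order.disp_t} {I : orderType dI}.
Variables (B R S : I -> set T) (G1 G2 : set I).
Hypothesis filt : tightly_sigma_filtered B R S.
Hypotheses (sat1 : saturated R S G1) (sat2 : saturated R S G2).
Implicit Types (G P : set I) (a b : I).

Lemma B_subalg a : is_subalg (B a).
Proof. by case: filt => _ []. Qed.

Lemma B_mono a b : a <= b -> B a `<=` B b.
Proof. by case: filt => _ [_ [Bmono _]]; apply: Bmono. Qed.

Lemma filt_pushout a : pushout (R a) (B a) (S a) (Bnext B a).
Proof. by case: filt => _ [_ [_ [_ [_ [_ /(_ a)[]]]]]]. Qed.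

Lemma S_subalg a : is_subalg (S a).
Proof. by case: filt => _ [_ [_ [_ [_ [_ /(_ a)[]]]]]]. Qed.

Lemma E_below_sub_B G a : E S (G `&` [set i | i < a]) `<=` B a.
Proof.
apply: gen_sub (B_subalg a) _ => x [i [[_ ia] Six]].
have [_ [_ [_ [SB _]]]] := filt_pushout i.
case: (SB _ Six) => [imax | [b [[ib bmin] Bbx]]]; first by case: (imax a).
exact: B_mono (bmin _ ia) _ Bbx.
Qed.

Lemma E_upto_patched G a : E S (G `&` [set i | i <= a]) `<=`
  patched (E S (G `&` [set i | i < a])) (S a).
Proof.
move=> x Ex; apply: gen_patched; [exact: E_subalg | exact: S_subalg |].
move: x Ex; apply: gen_sub (gen_subalg _) _ => x [i [[Gi]]].
rewrite /= le_eqVlt => /orP[/eqP-> Sax|ia Six]; apply: sub_gen; first by right.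
by left; apply: sub_gen; exists i.
Qed.

Lemma E_upto_below G a : ~ G a ->
  E S (G `&` [set i | i <= a]) `<=` E S (G `&` [set i | i < a]).
Proof.
move=> Gna; apply: E_mono => i [Gi]; rewrite /= le_eqVlt => /orP[/eqP ia|//].
by rewrite ia in Gi.
Qed.

Lemma S_sub_E_upto G a : G a -> S a `<=` E S (G `&` [set i | i <= a]).
Proof. by move=> Ga x Sax; apply: sub_gen; exists a; split=> //; split=> /=. Qed.

Definition separated_on P :=
  separates (E S (G1 `&` G2 `&` P)) (E S (G1 `&` P)) (E S (G2 `&` P)).

Lemma separated_step a : separated_on [set i | i < a] -> separated_on [set i | i <= a].
Proof.
rewrite /separated_on => IH.
have ZZ' : E S (G1 `&` G2 `&` [set i | i < a]) `<=` E S (G1 `&` G2 `&` [set i | i <= a]).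
  by apply: E_mono => i [G12i ia]; split=> //; apply: ltW.
have hS := S_subalg a; have hB := B_subalg a; have sep := pushout_separates (filt_pushout a).
have X'X := @E_upto_patched G1 a; have Y'Y := @E_upto_patched G2 a.
have XB := @E_below_sub_B G1 a; have YB := @E_below_sub_B G2 a.
have hE G := E_subalg S G.
case: (pselect (G1 a)) => g1; case: (pselect (G2 a)) => g2.
- have SZ' := @S_sub_E_upto (G1 `&` G2) a (conj g1 g2).
  have := separates_patched2 (hE _) hB hS (sat1 g1) XB sep YB IH ZZ' SZ' (hE _).
  exact: separates_mono (subset_refl _) X'X Y'Y.
- have := separates_trans YB (separates_patched_base (hE _) hB (sat1 g1) XB sep) IH.
  exact: separates_mono ZZ' X'X (E_upto_below g2).
- have := separates_trans XB (separates_patched_base (hE _) hB (sat2 g2) YB sep)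
    (separates_sym (hE _) IH).
  move/(separates_sym (hE _)).
  exact: separates_mono ZZ' (E_upto_below g1) Y'Y.
- exact: separates_mono ZZ' (E_upto_below g1) (E_upto_below g2) IH.
Qed.

Lemma separated_bigcup P : (forall b i, P b -> i <= b -> P i) ->
  (forall b, P b -> separated_on [set i | i <= b]) -> separated_on P.
Proof.
move=> Pdown IH x y Xx Yy xy.
case: (pselect (exists b, P b)) => [Pne|P0]; last first.
  have noE G G' : E S (G `&` P) `<=` E S (G' `&` P).
    by apply: E_mono => i [_ Pi]; case: P0; exists i.
  by exists x; split=> //; apply: noE Xx.
have [b1 Pb1 Xx'] := E_bigcup_upto Pne Xx.
have [b2 Pb2 Yy'] := E_bigcup_upto Pne Yy.
have [b [Pb b1b b2b]] : exists b, [/\ P b, b1 <= b & b2 <= b].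
  by case: (leP b1 b2) => b12; [exists b2 | exists b1]; rewrite ?lexx ?(ltW b12).
have lift G c : c <= b -> E S (G `&` [set i | i <= c]) `<=` E S (G `&` [set i | i <= b]).
  by move=> cb; apply: E_mono => i [Gi ic]; split=> //; apply: le_trans cb.
have [z [Zz xz zy]] := IH b Pb x y (lift _ _ b1b _ Xx') (lift _ _ b2b _ Yy') xy.
by exists z; split=> //; apply: E_mono Zz => i [G12i ib]; split=> //; apply: Pdown ib.
Qed.

Lemma separated_upto a : separated_on [set i | i <= a].
Proof.
have [wf _] := filt.
elim/(well_founded_ind wf): a => a IH; apply/separated_step/separated_bigcup => //.
by move=> b i ba ib; apply: le_lt_trans ib ba.
Qed.

Lemma separated_all : separated_on setT.
Proof. by apply: (@separated_bigcup setT) => // b _; apply: separated_upto. Qed.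

End Filtration.

Theorem lemma3p2 (d : Order.disp_t) (T : ctbDistrLatticeType d)
  (dI : Order.disp_t) (I : orderType dI) (B R S : I -> set T)
  (G1 G2 : set I) :
  tightly_sigma_filtered B R S ->
  saturated R S G1 -> saturated R S G2 ->
  saturated R S (fun i => G1 i /\ G2 i) ->
  pushout (E S (fun i => G1 i /\ G2 i)) (E S G1) (E S G2)
          (E S (fun i => G1 i \/ G2 i)).
Proof.
move=> filt sat1 sat2 _.
have := separated_all filt sat1 sat2; rewrite /separated_on !setIT => sep.
apply: pushout_of_separates sep; try exact: E_subalg.
- by apply: E_mono => i [].
- by apply: E_mono => i [].
- by apply: E_mono => i; left.
- by apply: E_mono => i; right.
- exact: E_setU.
Qed.
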